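(* For every $T$, every sequence of forecasts $\mathbf p\in[0,1]^T$ and outcomes $\mathbf x\in\{0,1\}^T$, there exist a finite action set $\mathcal A$ and a bounded utility function $u:\mathcal A\times\{0,1\}\to[-1,1]$ such that $\mathrm{AgentSwapReg}_u(\mathbf p,\mathbf x)\ge\mathrm{Cal}_2(\mathbf p,\mathbf x)$.
   Context: For forecast $p$, an agent with action set $\mathcal A$ and utility $u$ plays $a(p)\in\arg\max_{a\in\mathcal A}\mathbb E_{x\sim\mathrm{Ber}(p)}[u(a,x)]$. The agent swap regret is $\mathrm{AgentSwapReg}_u(\mathbf p,\mathbf x)=\max_{\pi:\mathcal A\to\mathcal A}\sum_{t=1}^T u(\pi(a(p_t)),x_t)-\sum_{t=1}^T u(a(p_t),x_t)$. With $n_p=|\{t:p_t=p\}|$, $m_p=|\{t:p_t=p,\ x_t=1\}|$, the $L_2$-calibration error is $\mathrm{Cal}_2(\mathbf p,\mathbf x)=\sum_p n_p(p-m_p/n_p)^2$ (sum over $p$ with $n_p>0$). *)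

From HB Require Import structures.
From mathcomp Require Import all_boot all_order all_algebra.
From mathcomp Require Import reals.
Set Implicit Arguments. Unset Strict Implicit. Unset Printing Implicit Defensive.
Import Order.TTheory GRing.Theory Num.Theory.
Local Open Scope ring_scope.

Section Defs.
Variable R : realType.

Definition exp_util (A : Type) (u : A -> bool -> R) (a : A) (q : R) : R :=
  (1 - q) * u a false + q * u a true.

Definition best_response (A : Type) (u : A -> bool -> R) (br : R -> A) : Prop :=
  forall q : R, 0 <= q <= 1 -> forall a : A, exp_util u a q <= exp_util u (br q) q.

Definition swap_gain (A : finType) (u : A -> bool -> R) (br : R -> A)
  (T : nat) (p : 'I_T -> R) (x : 'I_T -> bool) (pi : A -> A) : R :=
  \sum_(t < T) u (pi (br (p t))) (x t) - \sum_(t < T) u (br (p t)) (x t).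

(* AgentSwapReg = max over all pi : A -> A of swap_gain.  The identity map
   gives gain 0, so the neutral element 0 of the iterated max is harmless. *)
Definition agent_swap_reg (A : finType) (u : A -> bool -> R) (br : R -> A)
  (T : nat) (p : 'I_T -> R) (x : 'I_T -> bool) : R :=
  \big[Num.max/0]_(pi : {ffun A -> A}) swap_gain u br p x pi.

Definition n_of (T : nat) (p : 'I_T -> R) (q : R) : R :=
  #|[set t : 'I_T | p t == q]|%:R.
Definition m_of (T : nat) (p : 'I_T -> R) (x : 'I_T -> bool) (q : R) : R :=
  #|[set t : 'I_T | (p t == q) && x t]|%:R.

(* Cal_2 = sum over distinct forecast values q (those with n_q > 0). *)
Definition cal2 (T : nat) (p : 'I_T -> R) (x : 'I_T -> bool) : R :=
  \sum_(q <- undup [seq p t | t <- enum 'I_T])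
     n_of p q * (q - m_of p x q / n_of p q) ^+ 2.
End Defs.

From HB Require Import structures.
From mathcomp Require Import all_boot all_order all_algebra.
From mathcomp Require Import reals ring lra.
Set Implicit Arguments. Unset Strict Implicit. Unset Printing Implicit Defensive.
Import Order.TTheory GRing.Theory Num.Theory.
Local Open Scope ring_scope.

(* The actions are finitely many points of [0, 1] and the utility is the
   squared loss u(a, x) = -(a - x)^2, a proper scoring rule: an agent facing
   forecast q plays q itself.  Deviating from each forecast value q to its
   empirical frequency m_q / n_q gains, on the rounds with forecast q,
   sum_t (q - x_t)^2 - (m_q / n_q - x_t)^2 = n_q (q - m_q / n_q)^2
   (the bias-variance decomposition), so this one deviation gains Cal_2. *)

Lemma partition_big_undup (V : nmodType) (I : finType) (K : eqType)
    (k : I -> K) (F : I -> V) :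
  \sum_i F i = \sum_(c <- undup [seq k i | i <- enum I]) \sum_(i | k i == c) F i.
Proof.
under [RHS]eq_bigr do rewrite big_mkcond /=.
rewrite exchange_big /=; apply: eq_bigr => i _.
have ki_in : k i \in undup [seq k i | i <- enum I].
  by rewrite mem_undup map_f ?mem_enum.
rewrite (bigD1_seq _ ki_in (undup_uniq _)) /= eqxx big1 ?addr0 //.
by move=> c /negPf; rewrite eq_sym => ->.
Qed.

Lemma sum_sqr_gap_mean (R : comPzRingType) (I : finType) (P : pred I)
    (y : I -> R) (q c : R) :
  \sum_(i | P i) y i = #|P|%:R * c ->
  \sum_(i | P i) ((q - y i) ^+ 2 - (c - y i) ^+ 2) = #|P|%:R * (q - c) ^+ 2.
Proof.
move=> sum_y.
transitivity (\sum_(i | P i) ((q ^+ 2 - c ^+ 2) - 2 * (q - c) * y i)).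
  by apply: eq_bigr => i _; ring.
by rewrite sumrB sumr_const -mulr_sumr sum_y; ring.
Qed.

Section SquaredLoss.
Variable R : realType.

Definition sqr_loss_util (A : Type) (g : A -> R) (a : A) (b : bool) : R :=
  - (g a - (b : nat)%:R) ^+ 2.

Lemma exp_util_sqr_loss (A : Type) (g : A -> R) (a : A) (q : R) :
  exp_util (sqr_loss_util g) a q = - (g a - q) ^+ 2 - q * (1 - q).
Proof. by rewrite /exp_util /sqr_loss_util /=; ring. Qed.

Lemma sqr_loss_util_bounded (A : Type) (g : A -> R) (a : A) (b : bool) :
  0 <= g a <= 1 -> -1 <= sqr_loss_util g a b <= 1.
Proof. by rewrite /sqr_loss_util; case: b => /= /andP [? ?]; apply/andP; split; nra. Qed.

Lemma best_response_sqr_loss (A : Type) (g : A -> R) (br : R -> A) (a : A) (q : R) :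
  best_response (sqr_loss_util g) br -> 0 <= q <= 1 -> g a = q -> g (br q) = q.
Proof.
move=> br_best q01 ga_q; have := br_best q q01 a.
rewrite !exp_util_sqr_loss ga_q subrr expr0n /= => le_util.
have sqr_le0 : (g (br q) - q) ^+ 2 <= 0 by lra.
by apply/eqP; rewrite -subr_eq0 -sqrf_eq0 eq_le sqr_le0 sqr_ge0.
Qed.

End SquaredLoss.

Lemma best_response_exists (R : realType) (A : finType) (u : A -> bool -> R) :
  A -> exists br : R -> A, best_response u br.
Proof.
move=> a0; exists (fun q => [arg max_(a > a0) exp_util u a q]%O) => q _ a.
by case: arg_maxP => // b _; apply.
Qed.

Section EmpiricalFrequency.
Variables (R : realType) (T : nat) (p : 'I_T -> R) (x : 'I_T -> bool).

Definition freq (q : R) : R := m_of p x q / n_of p q.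

Lemma n_ofE (q : R) : n_of p q = #|[pred t | p t == q]|%:R.
Proof. by rewrite /n_of cardsE. Qed.

Lemma m_ofE (q : R) : m_of p x q = \sum_(t | p t == q) (x t : nat)%:R.
Proof.
rewrite (eq_bigr (fun t => if x t then 1 else 0)); last by move=> t _; case: (x t).
rewrite -big_mkcondr sumr_const; congr (_ *+ _); apply: eq_card => t; by rewrite !inE.
Qed.

Lemma n_of_forecast_neq0 (t : 'I_T) : n_of p (p t) != 0.
Proof. by rewrite /n_of pnatr_eq0 -lt0n card_gt0; apply/set0Pn; exists t; rewrite inE. Qed.

Lemma m_of_le_n_of (q : R) : m_of p x q <= n_of p q.
Proof.
rewrite /m_of /n_of ler_nat; apply: subset_leq_card; apply/subsetP => t.
by rewrite !inE => /andP [].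
Qed.

Lemma freq_in01 (q : R) : 0 <= freq q <= 1.
Proof.
rewrite /freq divr_ge0 ?ler0n //=.
have [->|n_neq0] := eqVneq (n_of p q) 0; first by rewrite invr0 mulr0 ler01.
by rewrite ler_pdivrMr ?mul1r ?m_of_le_n_of // lt_def n_neq0 ler0n.
Qed.

Lemma recalibration_gain :
  \sum_t ((p t - (x t : nat)%:R) ^+ 2 - (freq (p t) - (x t : nat)%:R) ^+ 2) = cal2 p x.
Proof.
rewrite (partition_big_undup p) /cal2; apply: eq_big_seq => q.
rewrite mem_undup => /mapP [t _ ->].
under eq_bigr => s /eqP ps_pt do rewrite ps_pt.
rewrite sum_sqr_gap_mean -?n_ofE //.
by rewrite -m_ofE /freq mulrC divfK ?n_of_forecast_neq0.
Qed.

End EmpiricalFrequency.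

Section Recalibration.
Variables (R : realType) (T : nat) (p : 'I_T -> R) (x : 'I_T -> bool).
Hypothesis p01 : forall t, 0 <= p t <= 1.

(* The point 0 keeps the action set nonempty when T = 0. *)
Definition points : seq R :=
  0 :: [seq p t | t <- enum 'I_T] ++ [seq freq p x (p t) | t <- enum 'I_T].

Definition action : finType := seq_sub points.

Definition action0 : action := SeqSub (mem_head 0 _).

Definition sqr_loss : action -> bool -> R := sqr_loss_util val.

Lemma points_in01 (v : R) : v \in points -> 0 <= v <= 1.
Proof.
rewrite inE mem_cat => /or3P [/eqP ->| /mapP [t _ ->] | /mapP [t _ ->]].
- by rewrite lexx ler01.
- exact: p01.
- exact: freq_in01.
Qed.

Lemma forecast_in_points (t : 'I_T) : p t \in points.
Proof. by rewrite inE mem_cat map_f ?mem_enum ?orbT. Qed.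

Lemma freq_in_points (t : 'I_T) : freq p x (p t) \in points.
Proof. by rewrite inE mem_cat (map_f (fun t => freq p x (p t))) ?mem_enum ?orbT. Qed.

Lemma best_response_forecast (br : R -> action) (t : 'I_T) :
  best_response sqr_loss br -> val (br (p t)) = p t.
Proof.
move=> br_best; apply: (best_response_sqr_loss (a := insubd action0 (p t))) => //.
by rewrite insubdK // forecast_in_points.
Qed.

Definition recalibrate : {ffun action -> action} :=
  [ffun a => insubd action0 (freq p x (val a))].

Lemma swap_gain_recalibrate (br : R -> action) :
  best_response sqr_loss br -> swap_gain sqr_loss br p x recalibrate = cal2 p x.
Proof.
move=> br_best; rewrite -recalibration_gain /swap_gain -sumrB.
apply: eq_bigr => t _.
rewrite /sqr_loss /sqr_loss_util ffunE best_response_forecast // insubdK ?freq_in_points //.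
by rewrite opprK addrC.
Qed.

End Recalibration.

Theorem theorem4p12 (R : realType) (T : nat) (p : 'I_T -> R) (x : 'I_T -> bool) :
  (forall t, 0 <= p t <= 1) ->
  exists (A : finType) (u : A -> bool -> R),
    (forall a b, -1 <= u a b <= 1) /\
    (exists br : R -> A, best_response u br) /\
    (forall br : R -> A, best_response u br ->
       agent_swap_reg u br p x >= cal2 p x).
Proof.
move=> p01; exists (action p x), (@sqr_loss _ _ p x); split; last split.
- by move=> a b; apply/sqr_loss_util_bounded/points_in01/ssvalP.
- exact/best_response_exists/action0.
- move=> br br_best; rewrite -(swap_gain_recalibrate p01 br_best).
  exact: le_bigmax.
Qed.
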